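(* Let $n\ge1$, $k\ge0$ be integers and define the $n\times n$ matrices $M_0(n,k)=\big(\mathcal P^+_{i+j}(k,0)\big)_{0\le i,j\le n-1}$ and $MP_0(n,k)=\big(\sum_{l\ge0}\mathcal P^+_{i+j}(k,l)\big)_{0\le i,j\le n-1}$. Then $$A(n)\cdot MP_0(n,k)=M_0(n,k)+C_0(n,k),$$ where $C_0(n,k)=(C_{i,j})_{0\le i,j\le n-1}$ has $C_{i,j}=0$ for $i\le n-2$ and $C_{n-1,j}=(xy)^{n-1}\sum_{l\ge0}\mathcal P_j(0,n-k+l)$.
   Context: Three-step paths consist of up-steps $(1,1)$, level steps $(1,0)$ and down-steps $(1,-1)$. Weights: $w((1,1))=1$, $w((1,0))=x+y$, $w((1,-1))=xy$; a path's weight is the product of its step weights. $\mathcal P_n(k,l)$ is the sum of weights of all three-step paths from $(0,k)$ to $(n,l)$; $\mathcal P^+_n(k,l)$ the same restricted to paths never running below the $x$-axis. The matrix $A(n)=(A_{n,i,j})_{0\le i,j\le n-1}$ is defined by $A_{n,i,j}=\frac{(1+x)(1+y)}{xy}$ if $i=j<n-1$; $-\frac1{xy}$ if $i=j-1<n-1$; $A_{n,n-1,n-1}=\frac{xy-(n-1)(x+y)}{xy}$; for $j<n-1$, $$A_{n,n-1,j}=\frac{(-1)^{n+j}}{xy}\sum_{l=j}^{n}\left(\binom lj\binom{n+j-1-l}{j}x^{l-j}y^{n-1-l}+\binom lj\binom{n+j-l}{j}x^{l-j}y^{n-l}\right);$$ and $0$ otherwise (binomial coefficients $\binom ab=0$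 if $b<0$ or $a<b$). *)

From HB Require Import structures.
From mathcomp Require Import all_boot all_order all_algebra.
Set Implicit Arguments. Unset Strict Implicit. Unset Printing Implicit Defensive.
Import Order.TTheory GRing.Theory Num.Theory.
Local Open Scope ring_scope.

Section Paths.
Variable R : fieldType.
Variables x y : R.

(* P^+_m(k,l): weighted sum of three-step paths of length m from (0,k) to
   (m,l) never going below the x-axis (heights are nats). The last step is
   an up-step (weight 1) from l-1, a level step (weight x+y) from l, or a
   down-step (weight xy) from l+1. *)
Fixpoint Pplus (m k l : nat) : R :=
  match m with
  | 0 => (k == l)%:R
  | m'.+1 => (if l is l'.+1 then Pplus m' k l' else 0)
             + (x + y) * Pplus m' k l + x * y * Pplus m' k l.+1
  end.

Fixpoint Pz (m : nat) (k l : int) : R :=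
  match m with
  | 0 => (k == l)%:R
  | m'.+1 => Pz m' k (l - 1) + (x + y) * Pz m' k l + x * y * Pz m' k (l + 1)
  end.

Definition binz (a : int) (b : nat) : R :=
  if (a < 0)%R then 0 else ('C(`|a|%N, b))%:R.

Definition Aent (n i j : nat) : R :=
  if (i == j) && (i < n.-1)%N then (1 + x) * (1 + y) / (x * y)
  else if (i.+1 == j) && (i < n.-1)%N then - 1 / (x * y)
  else if (i == n.-1) && (j == n.-1) then (x * y - (n.-1)%:R * (x + y)) / (x * y)
  else if (i == n.-1) && (j < n.-1)%N then
    (-1) ^+ (n + j) / (x * y) *
    \sum_(j <= l < n.+1)
      (binz l%:Z j * binz (n%:Z + j%:Z - 1 - l%:Z) j * x ^+ (l - j)
         * y ^ (n%:Z - 1 - l%:Z)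
       + binz l%:Z j * binz (n%:Z + j%:Z - l%:Z) j * x ^+ (l - j)
         * y ^ (n%:Z - l%:Z))
  else 0.

Definition Amx (n : nat) : 'M[R]_n := \matrix_(i < n, j < n) Aent n i j.

(* Sums over l >= 0: the summands vanish beyond the stated finite bounds
   (a path of length m from height k ends at height <= k + m; and
   P_j(0, h) = 0 unless |h| <= j), so these finite sums are the sums
   over all l >= 0. *)
Definition sumPplus (m k : nat) : R := \sum_(l < k + m + 1) Pplus m k l.

Definition sumPz (n k j : nat) : R :=
  \sum_(l < j + k + 1) Pz j 0 (n%:Z - k%:Z + l%:Z).

Definition M0 (n k : nat) : 'M[R]_n := \matrix_(i < n, j < n) Pplus (i + j) k 0.

Definition MP0 (n k : nat) : 'M[R]_n := \matrix_(i < n, j < n) sumPplus (i + j) k.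

Definition C0 (n k : nat) : 'M[R]_n :=
  \matrix_(i < n, j < n)
    (if (i : nat) == n.-1 then (x * y) ^+ n.-1 * sumPz n k j else 0).

End Paths.

(* Let T be the transfer operator on sequences v : nat -> R,
     (T v) k = v (k + 1) + (x + y) v k + x y v (k - 1),
   where the last term is absent for k = 0.  Decomposing a path according to
   its first step gives sum_l P^+_m(k, l) v l = (T^m v) k, so that
   MP0(i, j) = (T^(i+j) 1) k and M0(i, j) = (T^(i+j) delta_0) k.  As
   T 1 = (1 + x)(1 + y) 1 - x y delta_0, the bidiagonal rows of A(n) turn the
   columns of MP0 into those of M0.
   The last row of x y A(n) lists the coefficients of
   p_n(T) - p_(n-1)(T) + (1 + x)(1 + y) T^(n-1), where p_0 = 1,
   p_1 = T - x - y and p_(m+2) = (T - x - y) p_(m+1) - x y p_m.  An induction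
   on this recurrence shows p_(m+1)(T) 1 - p_m(T) 1 = (x y)^(m+1) 1_{k > m},
   so the last row produces x y T^(n-1) delta_0 + (x y)^n 1_{k >= n}; finally
   T^j 1_{k >= n} counts the unrestricted paths that make up C0. *)

From HB Require Import structures.
From mathcomp Require Import all_boot all_algebra.
From mathcomp Require Import zify ring.
Set Implicit Arguments. Unset Strict Implicit. Unset Printing Implicit Defensive.
Import GRing.Theory.
Local Open Scope ring_scope.

Lemma sum_delta (R : pzSemiRingType) N (F : 'I_N -> R) i (lt_iN : (i < N)%N) :
  \sum_(t < N) (i == t)%:R * F t = F (Ordinal lt_iN).
Proof.
rewrite (bigD1 (Ordinal lt_iN)) //= eqxx mul1r big1 ?addr0 // => t ne_t.
rewrite (_ : i == t = false) ?mul0r //.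
by apply: contraNF ne_t => /eqP eq_it; apply/eqP/val_inj.
Qed.

Section Transfer.
Variables (R : comPzRingType) (x y : R).

Definition transfer (v : nat -> R) (k : nat) : R :=
  v k.+1 + (x + y) * v k + (if k is k'.+1 then x * y * v k' else 0).

Lemma eq_transfer u v : u =1 v -> transfer u =1 transfer v.
Proof. by move=> uv [|k]; rewrite /transfer !uv. Qed.

Lemma eq_iter_transfer j u v : u =1 v -> iter j transfer u =1 iter j transfer v.
Proof. by elim: j => [|j IH] uv //=; apply/eq_transfer/IH. Qed.

Lemma transfer_comb a b u w :
  transfer (fun k => a * u k + b * w k) =1 (fun k => a * transfer u k + b * transfer w k).
Proof. by move=> [|k]; rewrite /transfer; ring. Qed.

Lemma transferB u w :
  transfer (fun k => u k - w k) =1 (fun k => transfer u k - transfer w k).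
Proof. by move=> [|k]; rewrite /transfer; ring. Qed.

Lemma iter_transfer_comb j a b u w :
  iter j transfer (fun k => a * u k + b * w k)
  =1 (fun k => a * iter j transfer u k + b * iter j transfer w k).
Proof.
elim: j => [|j IH] k //=.
by rewrite (eq_transfer IH) transfer_comb.
Qed.

Lemma transfer_sum (I : Type) (r : seq I) (P : pred I) (a : I -> R) (F : I -> nat -> R) :
  transfer (fun k => \sum_(t <- r | P t) a t * F t k)
  =1 (fun k => \sum_(t <- r | P t) a t * transfer (F t) k).
Proof.
by move=> [|k]; rewrite /transfer ?addr0 !mulr_sumr -!big_split;
  apply: eq_bigr => t _ /=; ring.
Qed.

Lemma iter_transfer_sum j (I : Type) (r : seq I) (P : pred I) (a : I -> R)
    (F : I -> nat -> R) :
  iter j transfer (fun k => \sum_(t <- r | P t) a t * F t k)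
  =1 (fun k => \sum_(t <- r | P t) a t * iter j transfer (F t) k).
Proof.
elim: j => [|j IH] k //=.
by rewrite (eq_transfer IH) transfer_sum.
Qed.

Definition const1 (l : nat) : R := 1.
Definition delta0 (l : nat) : R := (l == 0)%:R.
Definition ge_ind (n l : nat) : R := (n <= l)%:R.

Lemma transfer_const1 :
  transfer const1 =1 (fun k => (1 + x) * (1 + y) * const1 k + - (x * y) * delta0 k).
Proof. by move=> [|k]; rewrite /transfer /const1 /delta0 /=; ring. Qed.

Lemma transfer_iter_const1 j :
  transfer (iter j transfer const1) =1 (fun k => (1 + x) * (1 + y) * iter j transfer const1 k
                                        + - (x * y) * iter j transfer delta0 k).
Proof.
by move=> k; rewrite -iterS iterSr (eq_iter_transfer _ transfer_const1) iter_transfer_comb.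
Qed.


Definition binconv (a s t : nat) : R :=
  \sum_(i < a.+1) 'C(i + s, s)%:R * 'C(a - i + t, t)%:R * x ^+ i * y ^+ (a - i).

Lemma binconvSl a s t : binconv a.+1 s.+1 t = binconv a.+1 s t + x * binconv a s.+1 t.
Proof.
rewrite /binconv.
under eq_bigr => i _ do rewrite addnS binS natrD !mulrDl.
rewrite big_split addrC /=; congr (_ + _).
rewrite big_ord_recl /= add0n bin_small // !mul0r add0r mulr_sumr.
by apply: eq_bigr => i _; rewrite /bump /= add1n subSS addSnnS exprS; ring.
Qed.

Lemma binconvSr a s t : binconv a.+1 s t.+1 = binconv a.+1 s t + y * binconv a s t.+1.
Proof.
rewrite /binconv big_ord_recr [in RHS]big_ord_recr /= subnn !add0n !binn.
rewrite [RHS]addrAC; congr (_ + _).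
rewrite mulr_sumr -big_split; apply: eq_bigr => i _ /=.
have le_ia : (i <= a)%N by rewrite -ltnS.
by rewrite subSn // addnS binS addSnnS natrD exprS; ring.
Qed.

Lemma binconv0 s t : binconv 0 s t = 1.
Proof. by rewrite /binconv big_ord1 /= !binn; ring. Qed.

Lemma binconv1 t : binconv 1 t t = t.+1%:R * (x + y).
Proof. by rewrite /binconv big_ord_recr big_ord1 /= add1n binSn binn; ring. Qed.

Lemma binconvS00 a : binconv a.+1 0 0 = y ^+ a.+1 + x * binconv a 0 0.
Proof.
rewrite /binconv big_ord_recl /= !bin0 subn0 mulr_sumr; congr (_ + _); first ring.
by apply: eq_bigr => i _; rewrite !bin0 /bump /= add1n subSS exprS; ring.
Qed.

(* The coefficient of T^t in p_m, see [pcoef_rec]. *)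
Definition pcoef (m t : nat) : R :=
  if (t <= m)%N then (-1) ^+ (m + t) * binconv (m - t) t t else 0.

Lemma pcoef_gt m t : (m < t)%N -> pcoef m t = 0.
Proof. by move=> lt_mt; rewrite /pcoef leqNgt lt_mt. Qed.

Lemma pcoef_eq a m t : m = (a + t)%N -> pcoef m t = (-1) ^+ a * binconv a t t.
Proof.
move=> ->; rewrite /pcoef leq_addl addnK -addnA addnn -mul2n exprD exprM.
by rewrite sqrrN !expr1n mulr1.
Qed.

Lemma pcoef_diag m : pcoef m m = 1.
Proof. by rewrite (@pcoef_eq 0) // binconv0 mulr1. Qed.

Lemma pcoef_rec m t :
  pcoef m.+2 t =
  (if t is s.+1 then pcoef m.+1 s else 0) - (x + y) * pcoef m.+1 t - x * y * pcoef m t.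
Proof.
have [le_tm | lt_mt] := leqP t m.
  case: t le_tm => [_ | s le_sm].
    rewrite !(@pcoef_eq _ _ 0 (esym (addn0 _))) !binconvS00 !exprS; ring.
  have [a ->] : exists a, m = (a + s.+1)%N by exists (m - s.+1)%N; rewrite subnK.
  rewrite [pcoef _.+2 _](@pcoef_eq a.+2) ?[pcoef _.+1 s](@pcoef_eq a.+2);
    rewrite ?[pcoef _.+1 _.+1](@pcoef_eq a.+1) ?(@pcoef_eq a); try lia.
  rewrite (binconvSl a.+1 s s.+1) (binconvSr a.+1 s s) (binconvSl a s s.+1) !exprS; ring.
have [->|[->|lt_m2t]] : t = m.+1 \/ t = m.+2 \/ (m.+2 < t)%N by lia.
- rewrite (@pcoef_eq 1 _ m.+1) ?(@pcoef_eq 1 _ m) ?addSn //.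
  by rewrite pcoef_diag pcoef_gt // !binconv1; ring.
- by rewrite !pcoef_diag !pcoef_gt //; ring.
- case: t lt_m2t {lt_mt} => [|t] // lt_m2t.
  by rewrite !pcoef_gt ?mulr0 ?subr0 //; lia.
Qed.

Definition pseq (m k : nat) : R :=
  \sum_(t < m.+1) pcoef m t * iter t transfer const1 k.

Lemma pseqSS m :
  pseq m.+2
  =1 (fun k => transfer (pseq m.+1) k - (x + y) * pseq m.+1 k - x * y * pseq m k).
Proof.
move=> k; rewrite /pseq transfer_sum.
under eq_bigr => t _ do rewrite pcoef_rec !mulrBl.
rewrite !big_split /= !sumrN; congr (_ - _ - _).
- by rewrite big_ord_recl /= mul0r add0r.
- rewrite big_ord_recr /= pcoef_gt // mulr0 mul0r addr0 mulr_sumr.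
  by apply: eq_bigr => t _; rewrite mulrA.
- rewrite big_ord_recr /= pcoef_gt // mulr0 mul0r addr0.
  rewrite big_ord_recr /= pcoef_gt // mulr0 mul0r addr0 mulr_sumr.
  by apply: eq_bigr => t _; rewrite mulrA.
Qed.

Definition pdiff (m k : nat) : R := pseq m.+1 k - pseq m k.

Lemma pdiffSS m :
  pdiff m.+2
  =1 (fun k => transfer (pdiff m.+1) k - (x + y) * pdiff m.+1 k - x * y * pdiff m k).
Proof. by move=> k; rewrite /pdiff !pseqSS transferB; ring. Qed.

Lemma pdiff_stair m : pdiff m =1 (fun k => (x * y) ^+ m.+1 * (m < k)%:R).
Proof.
suff: pdiff m =1 (fun k => (x * y) ^+ m.+1 * (m < k)%:R)
   /\ pdiff m.+1 =1 (fun k => (x * y) ^+ m.+2 * (m.+1 < k)%:R) by case.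
elim: m => [|m [IHm IHm1]].
  have pseq0 : pseq 0 =1 const1.
    by move=> k; rewrite /pseq big_ord1 pcoef_diag mul1r.
  have pseq1 : pseq 1 =1 (fun k => transfer const1 k - (x + y)).
    move=> k; rewrite /pseq big_ord_recr big_ord1 /= !pcoef_diag (@pcoef_eq 1) //.
    by rewrite binconv1 /const1; ring.
  rewrite /pdiff; split=> -[|[|k]]; rewrite ?pseqSS ?(eq_transfer pseq1) !pseq1 !pseq0;
    by rewrite /transfer /const1 /=; ring.
split=> // k; rewrite pdiffSS (eq_transfer IHm1) IHm1 IHm.
by case: k => [|k]; rewrite /transfer /= ?ltnS !exprS; ring.
Qed.

Definition lastrow_coef (n t : nat) : R :=
  pcoef n.+1 t - pcoef n t + (t == n)%:R * ((1 + x) * (1 + y)).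

Lemma sum_lastrow_coef n k :
  \sum_(t < n.+1) lastrow_coef n t * iter t transfer const1 k
  = x * y * iter n transfer delta0 k + (x * y) ^+ n.+1 * ge_ind n.+1 k.
Proof.
have := pdiff_stair n k; rewrite /pdiff /pseq big_ord_recr /= pcoef_diag mul1r.
rewrite transfer_iter_const1 /ge_ind => stair.
have sum_diag : \sum_(t < n.+1) (t == n :> nat)%:R * ((1 + x) * (1 + y))
                                  * iter t transfer const1 k
               = (1 + x) * (1 + y) * iter n transfer const1 k.
  rewrite big_ord_recr /= eqxx mul1r big1 ?add0r // => t _.
  by rewrite ltn_eqF // !mul0r.
rewrite /lastrow_coef; under eq_bigr => t _ do rewrite mulrDl mulrBl.
by rewrite big_split sumrB /= sum_diag -stair; ring.
Qed.

Lemma iter_transfer_upper_row i j k :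
  (1 + x) * (1 + y) * iter j transfer (iter i transfer const1) k
    - iter j transfer (iter i.+1 transfer const1) k
  = x * y * iter j transfer (iter i transfer delta0) k.
Proof.
rewrite iterS (eq_iter_transfer _ (transfer_iter_const1 i)).
by rewrite iter_transfer_comb; ring.
Qed.

Lemma iter_transfer_last_row n j k :
  \sum_(t < n.+1) lastrow_coef n t * iter j transfer (iter t transfer const1) k
  = x * y * iter j transfer (iter n transfer delta0) k
    + (x * y) ^+ n.+1 * iter j transfer (ge_ind n.+1) k.
Proof.
rewrite -(iter_transfer_sum j _ _ _ (fun t : 'I_n.+1 => iter t transfer const1)).
by rewrite (eq_iter_transfer _ (sum_lastrow_coef n)) iter_transfer_comb.
Qed.

End Transfer.

Section Paths.
Variables (R : fieldType) (x y : R).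
Local Notation transfer := (transfer x y).

Lemma Pplus_gt m k l : (k + m < l)%N -> Pplus x y m k l = 0.
Proof.
elim: m l => [|m IH] [|l] /= lt_l; try lia.
  by rewrite (_ : k == l.+1 = false) //; apply/eqP; lia.
by rewrite !IH ?mulr0 ?addr0 //; lia.
Qed.

Lemma Pplus_transfer m (v : nat -> R) k :
  \sum_(l < (k + m).+1) Pplus x y m k l * v l = iter m transfer v k.
Proof.
elim: m v k => [|m IH] v k.
  rewrite addn0 /= big_ord_recr /= eqxx mul1r big1 ?add0r // => l _.
  by rewrite (_ : k == l = false) ?mul0r //; apply/eqP; move: (ltn_ord l); lia.
rewrite iterSr -IH addnS.
have drop_last (F : nat -> R) :
    \sum_(l < (k + m).+2) Pplus x y m k l * F l
    = \sum_(l < (k + m).+1) Pplus x y m k l * F l.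
  by rewrite big_ord_recr /= Pplus_gt ?mul0r ?addr0.
have shift_up :
    \sum_(l < (k + m).+2) (if (l : nat) is l'.+1 then Pplus x y m k l' else 0) * v l
    = \sum_(l < (k + m).+1) Pplus x y m k l * v l.+1.
  by rewrite big_ord_recl mul0r add0r.
have shift_down : \sum_(l < (k + m).+2) Pplus x y m k l.+1 * v l
    = \sum_(l < (k + m).+1) Pplus x y m k l * (if (l : nat) is l'.+1 then v l' else 0).
  by rewrite [RHS]big_ord_recl mulr0 add0r !big_ord_recr /= !Pplus_gt ?mul0r ?addr0.
transitivity (\sum_(l < (k + m).+2) (if (l : nat) is l'.+1 then Pplus x y m k l' else 0) * v l
    + (x + y) * \sum_(l < (k + m).+2) Pplus x y m k l * v l
    + x * y * \sum_(l < (k + m).+2) Pplus x y m k l.+1 * v l).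
  by rewrite !mulr_sumr -!big_split; apply: eq_bigr => l _; rewrite /= !mulrDl !mulrA.
rewrite shift_up drop_last shift_down !mulr_sumr -!big_split.
by apply: eq_bigr => -[[|l] lt_l] _ /=; rewrite /transfer; ring.
Qed.

Lemma sumPplus_transfer m k : sumPplus x y m k = iter m transfer (const1 R) k.
Proof.
by rewrite /sumPplus addn1 -Pplus_transfer; apply: eq_bigr => l _; rewrite /const1 mulr1.
Qed.

Lemma Pplus0_transfer m k : Pplus x y m k 0 = iter m transfer (delta0 R) k.
Proof.
rewrite -Pplus_transfer big_ord_recl /delta0 /= mulr1 big1 ?addr0 // => l _.
by rewrite mulr0.
Qed.

Lemma Pz_gt j (k h : int) : k + j%:Z < h -> Pz x y j k h = 0.
Proof.
elim: j k h => [|j IH] k h lt_h /=.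
  by rewrite (_ : k == h = false) //; apply/eqP; lia.
by rewrite !IH ?mulr0 ?addr0 //; lia.
Qed.

Definition sumPz_from (j : nat) (h : int) (N : nat) : R :=
  \sum_(l < N) Pz x y j 0 (h + l%:Z).

Lemma sumPz_fromS j h N :
  sumPz_from j.+1 h N
  = sumPz_from j (h - 1) N + (x + y) * sumPz_from j h N + x * y * sumPz_from j (h + 1) N.
Proof.
rewrite /sumPz_from /= !mulr_sumr -!big_split /=; apply: eq_bigr => l _.
by rewrite (addrAC h) (addrAC h l%:Z 1).
Qed.

(* For j <= n a walk of length j that steps below height 0 cannot end at a
   height >= n, so the boundary of [transfer] at height 0 is invisible. *)
Lemma iter_transfer_ge_ind n j k N : (j <= n)%N -> j%:Z < n%:Z - k%:Z + N%:Z ->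
  iter j transfer (ge_ind R n) k = sumPz_from j (n%:Z - k%:Z) N.
Proof.
elim: j k => [|j IH] k le_jn lt_jN.
  rewrite /= /ge_ind /sumPz_from; case: (leqP n k) => [le_nk | lt_kn]; last first.
    by rewrite big1 // => l _; apply: Pz_gt; lia.
  have lt_kN : (k - n < N)%N by lia.
  rewrite (bigD1 (Ordinal lt_kN)) //= big1 ?addr0 => [|l /eqP ne_l].
    by rewrite (_ : 0 == _ = true) //; apply/eqP; lia.
  rewrite (_ : 0 == _ = false) //; apply/eqP => eq_l; apply: ne_l.
  by apply: val_inj => /=; lia.
rewrite iterS /transfer sumPz_fromS (IH k.+1) ?(IH k); try lia.
case: k lt_jN => [|k] lt_jN.
  rewrite [sumPz_from j (_ + 1) N]big1 ?mulr0 ?addr0 => [|l _]; last by apply: Pz_gt; lia.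
  by congr (_ + _); apply: eq_bigr => l _; congr (Pz _ _ _ _ _); lia.
rewrite (IH k) ?/sumPz_from; try lia.
by congr (_ + _ + _ * _); apply: eq_bigr => l _; congr (Pz _ _ _ _ _); lia.
Qed.

Lemma binz_small (a : int) (b : nat) : a < b%:Z -> binz R a b = 0.
Proof. by rewrite /binz; case: ifP => // ge0_a lt_ab; rewrite bin_small //; lia. Qed.

Lemma sum_binz_binconv (c t N : nat) : (t <= c < N)%N ->
  \sum_(t <= l < N) binz R l%:Z t * binz R (c%:Z + t%:Z - l%:Z) t * x ^+ (l - t)
                     * y ^ (c%:Z - l%:Z)
  = binconv x y (c - t) t t.
Proof.
case/andP=> le_tc lt_cN.
rewrite (@big_cat_nat _ _ _ c.+1) /=; [| lia | lia].
rewrite [X in _ + X]big_nat_cond [X in _ + X]big1 ?addr0 => [|l]; last first.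
  case/andP=> /andP[lt_cl _] _.
  by rewrite (@binz_small (_ - _)) ?mulr0 ?mul0r //; lia.
rewrite -{1}[t]add0n big_addn big_mkord (_ : (c.+1 - t = (c - t).+1)%N); last lia.
apply: eq_bigr => i _; have lt_i := ltn_ord i.
rewrite (_ : c%:Z + t%:Z - (i + t)%:Z = (c - t - i + t)%N%:Z); last lia.
rewrite (_ : c%:Z - (i + t)%:Z = (c - t - i)%N%:Z); last lia.
by rewrite /binz /= addnK addnC.
Qed.

Lemma Aent_upper n i t : (i < n)%N ->
  Aent x y n.+1 i t = (i == t)%:R * ((1 + x) * (1 + y) / (x * y))
                      + (i.+1 == t)%:R * (- 1 / (x * y)).
Proof.
move=> lt_in; rewrite /Aent /= lt_in !andbT.
have [<- | ne_it] := eqVneq i t; first by rewrite (gtn_eqF (ltnSn i)) /=; ring.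
have [_ | ne_i1t] := eqVneq i.+1 t; first by rewrite /=; ring.
by rewrite (ltn_eqF lt_in) /=; ring.
Qed.

Lemma Aent_last n t : (t <= n)%N -> Aent x y n.+1 n t = lastrow_coef x y n t / (x * y).
Proof.
rewrite leq_eqVlt => /orP[/eqP -> | lt_tn];
  rewrite /Aent /= ltnn !andbF eqxx /= /lastrow_coef.
  by rewrite pcoef_diag (@pcoef_eq _ _ _ 1) // binconv1 eqxx /= -natr1; ring.
rewrite (ltn_eqF lt_tn) lt_tn /= big_split /=.
have shift_top (l : nat) : n.+1%:Z + t%:Z - 1 - l%:Z = n%:Z + t%:Z - l%:Z by lia.
have shift_exp (l : nat) : n.+1%:Z - 1 - l%:Z = n%:Z - l%:Z by lia.
under eq_bigr => l _ do rewrite shift_top shift_exp.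
rewrite !sum_binz_binconv; try lia.
rewrite /pcoef (ltnW lt_tn) (leqW (ltnW lt_tn)) mul0r addr0 addSn exprS; ring.
Qed.

Lemma MP0_transfer n k (t j : 'I_n) :
  MP0 x y n k t j = iter j transfer (iter t transfer (const1 R)) k.
Proof. by rewrite mxE sumPplus_transfer addnC iterD. Qed.

Lemma M0_transfer n k (i j : 'I_n) :
  M0 x y n k i j = iter j transfer (iter i transfer (delta0 R)) k.
Proof. by rewrite mxE Pplus0_transfer addnC iterD. Qed.

Lemma mulmx_Amx_MP0_upper n k (i j : 'I_n.+1) : x * y != 0 -> (i < n)%N ->
  (Amx x y n.+1 *m MP0 x y n.+1 k) i j = M0 x y n.+1 k i j.
Proof.
move=> xy_neq0 lt_in; rewrite mxE M0_transfer.
under eq_bigr => t _ do rewrite mxE Aent_upper // MP0_transfer mulrDl -!mulrA.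
rewrite big_split /= (sum_delta _ (ltn_ord i)) (sum_delta _ (lt_in : (i.+1 < n.+1)%N)) /=.
have := iter_transfer_upper_row x y i j k; rewrite iterS => upper.
by rewrite -[RHS](mulKf xy_neq0) -upper; ring.
Qed.

Lemma mulmx_Amx_MP0_last n k (j : 'I_n.+1) : x * y != 0 ->
  (Amx x y n.+1 *m MP0 x y n.+1 k) ord_max j
  = M0 x y n.+1 k ord_max j + (x * y) ^+ n * sumPz x y n.+1 k j.
Proof.
move=> xy_neq0; rewrite mxE M0_transfer.
under eq_bigr => t _ do rewrite mxE (Aent_last (ltnSE (ltn_ord t))) MP0_transfer mulrAC.
rewrite -mulr_suml iter_transfer_last_row.
rewrite (iter_transfer_ge_ind _ _ (N := j + k + 1)); last lia; last exact/ltnW/ltn_ord.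
by rewrite exprS -(mulrA (x * y)) -mulrDr mulrC mulKf.
Qed.

End Paths.

Theorem lemma11 (R : fieldType) (x y : R) (hx : x != 0) (hy : y != 0)
  (n k : nat) (hn : (1 <= n)%N) :
  Amx x y n *m MP0 x y n k = M0 x y n k + C0 x y n k.
Proof.
case: n hn => [|n] // _; have xy_neq0 : x * y != 0 by rewrite mulf_neq0.
apply/matrixP => i j; rewrite [RHS]mxE [C0 x y n.+1 k i j]mxE /=.
have [lt_in | ge_in] := ltnP i n.
  by rewrite (ltn_eqF lt_in) addr0 mulmx_Amx_MP0_upper.
have -> : i = ord_max by apply/val_inj/eqP; rewrite eqn_leq ge_in -ltnS ltn_ord.
by rewrite eqxx mulmx_Amx_MP0_last.
Qed.
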